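(* Let $k\ge 2$ be an integer. Every finite simple graph $G$ is an induced subgraph of some finite simple graph $H$ that admits a closed neighborhood balanced $k$-coloring.
   Context: For a vertex $v$ of a graph $G$, $N[v]=\{v\}\cup\{u : uv\in E(G)\}$ is its closed neighborhood. For an integer $k\ge 2$, a closed neighborhood balanced $k$-coloring of $G$ is a map $c: V(G)\to\{1,2,\dots,k\}$ such that for every vertex $v$ the numbers $|\{u\in N[v] : c(u)=i\}|$, $i=1,\dots,k$, are all equal. *)

From mathcomp Require Import all_boot.
Set Implicit Arguments. Unset Strict Implicit. Unset Printing Implicit Defensive.

Definition simple_graph (T : finType) (e : rel T) : Prop :=
  symmetric e /\ irreflexive e.

Definition closed_nbhd (T : finType) (e : rel T) (v : T) : {set T} :=
  [set u | (u == v) || e v u].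

Definition cnb_coloring (T : finType) (e : rel T) (k : nat) (c : T -> 'I_k) : Prop :=
  forall (v : T) (i j : 'I_k),
    #|[set u in closed_nbhd e v | c u == i]| = #|[set u in closed_nbhd e v | c u == j]|.

Definition induced_subgraph (T : finType) (e : rel T) (T' : finType) (e' : rel T') : Prop :=
  exists f : T -> T', injective f /\ forall x y : T, e' (f x) (f y) = e x y.

(* Blow every vertex x of G up into a clique {x} x 'I_k of twins, two vertices
   of different cliques being adjacent when their base vertices are.  The
   closed neighbourhood of (x, i) is then N[x] x 'I_k, so colouring each vertex
   by its index in its clique uses every colour exactly |N[x]| times, and G
   sits inside as the induced subgraph on one index. *)
From mathcomp Require Import all_boot.

Set Implicit Arguments.
Unset Strict Implicit.
Unset Printing Implicit Defensive.

Section CliqueBlowup.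

Variables (T : finType) (e : rel T) (k : nat).

Definition clique_blowup : rel (T * 'I_k) :=
  fun a b => (a.1 == b.1) && (a.2 != b.2) || e a.1 b.1.

Lemma clique_blowup_simple : simple_graph e -> simple_graph clique_blowup.
Proof.
move=> [e_sym e_irr]; split.
- by move=> [x i] [y j]; rewrite /clique_blowup /= e_sym eq_sym [i == j]eq_sym.
- by move=> [x i]; rewrite /clique_blowup /= !eqxx e_irr.
Qed.

Lemma clique_blowup_induced (i0 : 'I_k) : induced_subgraph e clique_blowup.
Proof.
exists (fun x => (x, i0)); split; first by move=> x y [].
by move=> x y; rewrite /clique_blowup /= eqxx andbF.
Qed.

Lemma closed_nbhd_clique_blowup (v : T * 'I_k) :
  closed_nbhd clique_blowup v = setX (closed_nbhd e v.1) [set: 'I_k].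
Proof.
case: v => x i; apply/setP => -[y j].
rewrite !inE andbT /clique_blowup /= xpair_eqE.
by case: (eqVneq y x) => [->|] //=; case: eqVneq.
Qed.

Lemma cnb_coloring_clique_blowup : cnb_coloring clique_blowup snd.
Proof.
suff colour_class v (c : 'I_k) :
    #|[set u in closed_nbhd clique_blowup v | u.2 == c]| = #|closed_nbhd e v.1|.
  by move=> v i j; rewrite !colour_class.
have -> : [set u in closed_nbhd clique_blowup v | u.2 == c] =
          setX (closed_nbhd e v.1) [set c].
  by apply/setP => -[y j]; rewrite closed_nbhd_clique_blowup !inE andbT.
by rewrite cardsX cards1 muln1.
Qed.

End CliqueBlowup.

Theorem theorem2p6 (k : nat) (hk : 2 <= k) (T : finType) (e : rel T) :
  simple_graph e ->
  exists (T' : finType) (e' : rel T'),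
    simple_graph e' /\ induced_subgraph e e' /\
    exists c : T' -> 'I_k, cnb_coloring e' c.
Proof.
move=> G_simple; have k_gt0 : 0 < k by apply: leq_trans hk.
exists _, (@clique_blowup T e k).
split; first exact: clique_blowup_simple.
split; first exact: clique_blowup_induced (Ordinal k_gt0).
by exists snd; apply: cnb_coloring_clique_blowup.
Qed.
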